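(* Let $d\ge 2$ and $n\ge 1$ be integers and let $G=(E,D,\partial D)$ be the $d$-dimensional hypercubic lattice graph described in the context. If $\gamma,\gamma':E\to(0,\infty)$ are two conductivities with equal Dirichlet-to-Neumann matrices, $\Lambda_\gamma=\Lambda_{\gamma'}$, then $\gamma=\gamma'$ on every edge of $E$.
   Context: $D=\{x\in\mathbb Z^d: 1\le x_i\le n \text{ for all } i\}$ and $\partial D=\{p\in\mathbb Z^d:\min_{q\in D}\|q-p\|_{\ell^1}=1\}$ (the points with exactly one coordinate in $\{0,n+1\}$ and all others in $\{1,\dots,n\}$). $E$ is the set of unordered pairs $pq=\{p,q\}\subseteq D\cup\partial D$ with $\|p-q\|_{\ell^1}=1$ and $\{p,q\}\not\subseteq\partial D$. Write $\mathcal N(p)=\{q:pq\in E\}$; each $b\in\partial D$ has exactly one neighbour $q_b$, and $q_b\in D$. A conductivity is a map $\gamma:E\to(0,\infty)$, $\gamma_{pq}=\gamma_{qp}$. For $\mathbf u\in\mathbb R^{D\cup\partial D}$ set $(\Delta_\gamma\mathbf u)_p=\sum_{q\in\mathcal N(p)}\gamma_{pq}(\mathbf u_q-\mathbf u_p)$ for $p\in D$. For every $\varphi\in\mathbb R^{\partial D}$ there is a unique $\mathbf u$ with $\Delta_\gamma\mathbf u=0$ on $D$ and $\mathbf u=\varphi$ on $\partial D$; write $S_\gamma\varphi=\mathbf u$. The boundary current is $(D_\gamma\mathbf u)_b=\gamma_{bq_b}(\mathbf u_{q_b}-\mathbf u_b)$ for $b\in\partial D$, and the DtN matrix is $\Lambda_\gamma=D_\gamma\circ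 S_\gamma:\mathbb R^{\partial D}\to\mathbb R^{\partial D}$. *)

From HB Require Import structures.
From mathcomp Require Import all_boot all_order all_algebra.
From mathcomp Require Import reals.
From Stdlib Require Import ClassicalEpsilon.
Set Implicit Arguments. Unset Strict Implicit. Unset Printing Implicit Defensive.
Import Order.TTheory GRing.Theory Num.Theory.
Local Open Scope ring_scope.

(* Lattice points with all coordinates in {0,...,n+1}: every point of
   D ∪ ∂D lives here (and every lattice point at l1-distance 1 from
   D ∪ ∂D that itself lies in D ∪ ∂D). *)
Definition pt (d n : nat) := {ffun 'I_d -> 'I_n.+2}.

Section Grid.
Variables (d n : nat).

Definition extreme (c : 'I_n.+2) : bool := (c == 0 :> nat) || (c == n.+1 :> nat).

Definition inD (p : pt d n) : bool := [forall i, ~~ extreme (p i)].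

Definition inBd (p : pt d n) : bool := #|[set i | extreme (p i)]| == 1%N.

Definition inV (p : pt d n) : bool := inD p || inBd p.

Definition l1dist (p q : pt d n) : nat :=
  (\sum_(i < d) ((p i - q i) + (q i - p i)))%N.

Definition edge (p q : pt d n) : bool :=
  [&& inV p, inV q, l1dist p q == 1%N & ~~ (inBd p && inBd q)].

Variable R : realType.

(* a conductivity: positive on edges, symmetric (gamma_pq = gamma_qp);
   values off E are irrelevant *)
Definition conductivity (g : pt d n -> pt d n -> R) : Prop :=
  (forall p q, edge p q -> 0 < g p q) /\ (forall p q, edge p q -> g p q = g q p).

Definition lap (g : pt d n -> pt d n -> R) (u : pt d n -> R) (p : pt d n) : R :=
  \sum_(q | edge p q) g p q * (u q - u p).

Definition dirichlet_sol (g : pt d n -> pt d n -> R) (phi : pt d n -> R)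
  (u : pt d n -> R) : Prop :=
  (forall p, inD p -> lap g u p = 0) /\ (forall b, inBd b -> u b = phi b).

Definition Sol (g : pt d n -> pt d n -> R) (phi : pt d n -> R) : pt d n -> R :=
  epsilon (inhabits (fun _ => 0)) (dirichlet_sol g phi).

Definition current (g : pt d n -> pt d n -> R) (u : pt d n -> R) (b : pt d n) : R :=
  if [pick q | edge b q] is Some q then g b q * (u q - u b) else 0.

(* Dirichlet-to-Neumann map Lambda_gamma = D_gamma o S_gamma; only the
   values of phi on ∂D and of the output on ∂D are meaningful *)
Definition DtN (g : pt d n -> pt d n -> R) (phi : pt d n -> R) : pt d n -> R :=
  current g (Sol g phi).

End Grid.

From HB Require Import structures.
From mathcomp Require Import all_boot all_order all_algebra.
From mathcomp Require Import reals.
From mathcomp Require Import zify ring lra.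
From Stdlib Require Import ClassicalEpsilon.
Set Implicit Arguments. Unset Strict Implicit. Unset Printing Implicit Defensive.
Import Order.TTheory GRing.Theory Num.Theory.

(* Layer stripping along a coordinate direction [v]. If [g] and [g'] agree
   on all edges up to height [m] (the [v]-coordinate), then the boundary
   currents on the bottom face and the harmonic equation one layer down show,
   height by height, that the two Dirichlet solutions agree up to height [m]
   for every boundary datum.
   An edge [p q] one step higher, with [q] obtained from [p] by increasing a
   coordinate [j], is recovered with a special solution: sweeping in a
   direction [i] from the indicator of a point on a diagonal of the
   (i, v)-plane produces a [g]-harmonic [w] that vanishes on the open
   half-space above the diagonal but not at a prescribed point [b] of it.
   With [b = p] if [j = v], and [b = q], [i = j] otherwise, the other endpoint
   lies in the half-space. Equal Dirichlet-to-Neumann maps force the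
   [g']-solution with boundary values [w] to vanish there too (unique
   continuation from the face [t i = 0]), and the harmonic equation at [p],
   in which every other flux is already known to agree, gives
   [g p q = g' p q]. Existence and uniqueness of Dirichlet solutions come from
   the maximum principle. *)

Section Lattice.
Variables d n : nat.
Local Notation pt := (pt d n).

Lemma pt_eq (p q : pt) : (forall o, (p o : nat) = q o) -> p = q.
Proof. by move=> h; apply/ffunP => o; apply/val_inj/h. Qed.

Lemma coord_le (c : 'I_n.+2) : (c <= n.+1)%N.
Proof. by rewrite -ltnS ltn_ord. Qed.

Definition set_coord (p : pt) (j : 'I_d) (k : nat) : pt :=
  [ffun o => if o == j then inord k else p o].

Definition up_at (j : 'I_d) (p : pt) : pt := set_coord p j (p j).+1.
Definition down_at (j : 'I_d) (p : pt) : pt := set_coord p j (p j).-1.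

Lemma set_coord_eq (p : pt) j k : (k <= n.+1)%N -> (set_coord p j k j : nat) = k.
Proof. by move=> hk; rewrite ffunE eqxx inordK. Qed.

Lemma set_coord_neq (p : pt) j k o : o != j -> set_coord p j k o = p o.
Proof. by move=> ho; rewrite ffunE (negbTE ho). Qed.

Lemma set_coordK (p : pt) j k : (k <= n.+1)%N -> set_coord (set_coord p j k) j (p j) = p.
Proof.
move=> hk; apply: pt_eq => o; case: (eqVneq o j) => [->|oj].
  by rewrite set_coord_eq // coord_le.
by rewrite !set_coord_neq.
Qed.

Lemma up_at_eq (p : pt) j : (p j <= n)%N -> (up_at j p j : nat) = (p j).+1.
Proof. by move=> hp; rewrite set_coord_eq. Qed.

Lemma down_at_eq (p : pt) j : (down_at j p j : nat) = (p j).-1.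
Proof. by rewrite set_coord_eq // (leq_trans (leq_pred _)) ?coord_le. Qed.

Lemma up_at_neq (p : pt) j o : o != j -> up_at j p o = p o.
Proof. exact: set_coord_neq. Qed.

Lemma down_at_neq (p : pt) j o : o != j -> down_at j p o = p o.
Proof. exact: set_coord_neq. Qed.

Lemma up_atK (p : pt) j : (p j <= n)%N -> down_at j (up_at j p) = p.
Proof. by move=> hp; rewrite /down_at up_at_eq //= set_coordK. Qed.

Lemma down_atK (p : pt) j : (0 < p j)%N -> up_at j (down_at j p) = p.
Proof.
move=> hp; rewrite /up_at down_at_eq prednK // set_coordK //.
by rewrite (leq_trans (leq_pred _)) ?coord_le.
Qed.

Lemma extremeE (c : 'I_n.+2) : extreme c = ~~ (0 < c <= n)%N.
Proof.
rewrite /extreme; case: c => [[|k] hk] //=.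
by rewrite eqSS -ltnNge ltnS eqn_leq; rewrite !ltnS in hk; rewrite hk.
Qed.

Lemma extremeN (c : 'I_n.+2) : ~~ extreme c = (0 < c <= n)%N.
Proof. by rewrite extremeE negbK. Qed.

Lemma inDP (p : pt) : reflect (forall j, 0 < p j <= n)%N (inD p).
Proof.
apply: (iffP forallP) => h j; first by have := h j; rewrite extremeE negbK.
by rewrite extremeE negbK h.
Qed.

Lemma inD_notBd (p : pt) : inD p -> ~~ inBd p.
Proof.
move/forallP=> h; rewrite /inBd.
have -> : [set o | extreme (p o)] = set0 by apply/setP => o; rewrite !inE (negbTE (h o)).
by rewrite cards0.
Qed.

Lemma inBd_notD (p : pt) : inBd p -> ~~ inD p.
Proof. by apply: contraTN; apply: inD_notBd. Qed.

Section InteriorExcept.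
Variables (p : pt) (j : 'I_d).
Hypothesis hj : forall o, o != j -> ~~ extreme (p o).

Lemma inD_except : inD p = ~~ extreme (p j).
Proof.
apply/forallP/idP => [|H o]; first exact.
by case: (eqVneq o j) => [->|/hj].
Qed.

Lemma inBd_except : inBd p = extreme (p j).
Proof.
rewrite /inBd.
have -> : [set o | extreme (p o)] = if extreme (p j) then [set j] else set0.
  apply/setP => o; rewrite inE; case: (eqVneq o j) => [->|oj].
    by case: ifP => e; rewrite ?inE ?eqxx ?e.
  by rewrite (negbTE (hj oj)); case: ifP; rewrite ?inE ?(negbTE oj).
by case: ifP; rewrite ?cards1 ?cards0.
Qed.

End InteriorExcept.

Lemma inBd_extreme (p : pt) : inBd p -> exists j, extreme (p j).
Proof. by move/cards1P => [j hj]; exists j; have := set11 j; rewrite -hj inE. Qed.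

Lemma l1dist_eq1 (p q : pt) : l1dist p q = 1%N ->
  exists j, (forall o, o != j -> q o = p o) /\
            ((q j : nat) = (p j).+1 \/ (p j : nat) = (q j).+1).
Proof.
rewrite /l1dist => h.
have [j _ hj] : exists2 j, true & ((p j - q j) + (q j - p j) != 0)%N.
  apply/exists_inP; apply: contraT; rewrite negb_exists_in => /forall_inP H.
  by move: h; rewrite big1 // => o _; apply/eqP; rewrite -[_ == _]negbK H.
move: h; rewrite (bigD1 j) //=.
set S := bigop _ _ _ => h.
have /eqP : S = 0%N by lia.
rewrite /S sum_nat_eq0 => /forall_inP hr; exists j; split; last by lia.
by move=> o /hr /eqP e; apply/val_inj => /=; lia.
Qed.

Lemma l1dist_set_coord (p : pt) j k : (k <= n.+1)%N ->
  l1dist p (set_coord p j k) = ((p j - k) + (k - p j))%N.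
Proof.
move=> hk; rewrite /l1dist (bigD1 j) //= big1 ?addn0 ?set_coord_eq //.
by move=> o ho; rewrite set_coord_neq // subnn.
Qed.

Lemma edge_sym (p q : pt) : edge p q = edge q p.
Proof.
rewrite /edge /l1dist andbCA [inBd p && _]andbC; congr [&& _, _, _ & _].
by congr (_ == _); apply: eq_bigr => o _; rewrite addnC.
Qed.

Lemma edge_inVl (p q : pt) : edge p q -> inV p.
Proof. by case/and4P. Qed.

Lemma edge_inVr (p q : pt) : edge p q -> inV q.
Proof. by case/and4P. Qed.

Lemma edge_up_down (s r : pt) : edge s r ->
  exists j, (r = up_at j s /\ (s j <= n)%N) \/ (r = down_at j s /\ (0 < s j)%N).
Proof.
case/and4P => _ _ /eqP /l1dist_eq1 [j [hr hj]]; exists j.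
have rj := coord_le (r j).
case: hj => hj; [left | right]; split; try lia; apply: pt_eq => o.
  by case: (eqVneq o j) => [->|oj]; [rewrite up_at_eq //; lia | rewrite up_at_neq ?hr].
by case: (eqVneq o j) => [->|oj]; [rewrite down_at_eq; lia | rewrite down_at_neq ?hr].
Qed.

Lemma bd_edge_inD (b t : pt) : inBd b -> edge b t -> inD t.
Proof.
move=> hb /and4P [_ ht _ hnb]; move: ht hnb; rewrite /inV hb /=.
by case: (inD t) => //= ->.
Qed.



Lemma edge_coord_le (s r : pt) j : edge s r -> (r j <= (s j).+1)%N /\ (s j <= (r j).+1)%N.
Proof.
move=> /edge_up_down [k [[-> hk]|[-> hk]]]; case: (eqVneq j k) => [->|jk];
  rewrite ?up_at_eq ?down_at_eq ?up_at_neq ?down_at_neq //; lia.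
Qed.

Lemma edge_coord_gt (s r : pt) j : edge s r -> (s j < r j)%N -> r = up_at j s.
Proof.
move=> /edge_up_down [k [[-> hk]|[-> hk]]]; case: (eqVneq j k) => [->//|jk];
  rewrite ?down_at_eq ?up_at_neq ?down_at_neq ?ltnn //; lia.
Qed.

Lemma edge_coord_le_up (s r : pt) j : edge s r -> r != up_at j s -> (r j <= s j)%N.
Proof. by move=> e; apply: contraR; rewrite -ltnNge => /(edge_coord_gt e) ->. Qed.

Lemma edge_coord_neq (s r : pt) j o : edge s r -> s j != r j -> o != j -> r o = s o.
Proof.
move=> /edge_up_down [k [[-> _]|[-> _]]] sr oj; have [kj|kj] := eqVneq k j.
- by subst k; rewrite up_at_neq.
- by move: sr; rewrite up_at_neq ?eqxx // eq_sym.
- by subst k; rewrite down_at_neq.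
- by move: sr; rewrite down_at_neq ?eqxx // eq_sym.
Qed.

Lemma bd_edge_uniq (b t1 t2 : pt) : inBd b -> edge b t1 -> edge b t2 -> t1 = t2.
Proof.
move=> hb; have [e] := inBd_extreme hb; rewrite extremeE => he.
have nb t : edge b t -> (forall o, o != e -> t o = b o) /\ (0 < t e <= n)%N.
  move=> et; have /inDP tD := bd_edge_inD hb et; split; last exact: tD.
  by move=> o; apply: (edge_coord_neq et); apply: contraNneq he => ->; apply: tD.
move=> e1 e2; have [h1 t1e] := nb _ e1; have [h2 t2e] := nb _ e2.
apply: pt_eq => o; have [->|oe] := eqVneq o e; last by rewrite h1 // h2.
by have := edge_coord_le e e1; have := edge_coord_le e e2; move: he t1e t2e; lia.
Qed.

Lemma edge_same_coord (p q : pt) o : edge p q -> p o = q o -> ~~ extreme (p o).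
Proof.
move=> /and4P [pV qV _ nb] e; apply/negP => ex; move: nb.
have pB : inBd p by move: pV; rewrite /inV; case/orP => // /forallP /(_ o); rewrite ex.
have qB : inBd q by move: qV; rewrite /inV; case/orP => // /forallP /(_ o); rewrite -e ex.
by rewrite pB qB.
Qed.

Hypothesis n_gt0 : (0 < n)%N.

Lemma edge_up_at (p : pt) j : (forall o, o != j -> ~~ extreme (p o)) -> (p j <= n)%N ->
  edge p (up_at j p).
Proof.
move=> hp hj.
have hu : forall o, o != j -> ~~ extreme (up_at j p o) by move=> o oj; rewrite up_at_neq // hp.
rewrite /edge /inV (inD_except hp) (inBd_except hp) (inD_except hu) (inBd_except hu).
rewrite l1dist_set_coord // !extremeE up_at_eq //.
by apply/and4P; split; rewrite ?orNb //; lia.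
Qed.

Lemma edge_up_at_inD (p : pt) j : inD p -> edge p (up_at j p).
Proof.
by move=> /inDP hp; apply: edge_up_at => [o _|]; [rewrite extremeE hp | have /andP[] := hp j].
Qed.

Lemma edge_down_at_inD (p : pt) j : inD p -> edge p (down_at j p).
Proof.
move=> /inDP hp; have /andP [hj0 hjn] := hp j.
rewrite edge_sym -{2}(down_atK hj0); apply: edge_up_at.
  by move=> o oj; rewrite down_at_neq // extremeE hp.
by rewrite down_at_eq; lia.
Qed.

End Lattice.

Local Open Scope ring_scope.

Section Laplacian.
Variables (d n : nat) (R : realType).
Local Notation pt := (pt d n).
Implicit Types (g : pt -> pt -> R) (u w : pt -> R).

Definition flux g u (p q : pt) : R := g p q * (u q - u p).

Definition harmonic g u : Prop := forall s, inD s -> lap g u s = 0.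

Lemma lap_split g u (s t : pt) : edge s t ->
  lap g u s = flux g u s t + \sum_(r | edge s r && (r != t)) flux g u s r.
Proof. by move=> e; rewrite /lap (bigD1 t). Qed.

Lemma lapB g u w s : lap g (fun x => u x - w x) s = lap g u s - lap g w s.
Proof. by rewrite /lap -sumrB; apply: eq_bigr => q _; ring. Qed.

Lemma lapN g u s : lap g (fun x => - u x) s = - lap g u s.
Proof. by rewrite /lap -sumrN; apply: eq_bigr => q _; ring. Qed.

Lemma lap_sum g (I : finType) (c : I -> R) (U : I -> pt -> R) s :
  lap g (fun x => \sum_j c j * U j x) s = \sum_j c j * lap g (U j) s.
Proof.
rewrite /lap; under [RHS]eq_bigr do rewrite mulr_sumr; rewrite [RHS]exchange_big /=.
by apply: eq_bigr => q _; rewrite -sumrB mulr_sumr; apply: eq_bigr => j _; ring.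
Qed.

Lemma lap_ext g u w s : u =1 w -> lap g u s = lap g w s.
Proof. by move=> uw; apply: eq_bigr => q _; rewrite !uw. Qed.

Lemma current_eq g u (b t : pt) : inBd b -> edge b t -> current g u b = flux g u b t.
Proof.
move=> hb e; rewrite /current; case: pickP => [q hq|/(_ t)]; last by rewrite e.
by rewrite (bd_edge_uniq hb hq e).
Qed.

End Laplacian.

Section Dirichlet.
Variables (d n : nat) (R : realType).
Hypothesis n_gt0 : (0 < n)%N.
Variable i0 : 'I_d.
Local Notation pt := (pt d n).
Variable g : pt -> pt -> R.
Hypothesis hg : conductivity g.
Implicit Types (u w phi : pt -> R).

Lemma conductivity_gt0 (p q : pt) : edge p q -> 0 < g p q.
Proof. by case: hg => h _; apply: h. Qed.

Lemma conductivity_neq0 (p q : pt) : edge p q -> g p q != 0.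
Proof. by move/conductivity_gt0/gt_eqF ->. Qed.

Lemma harmonic_last_nb w (s t : pt) : harmonic g w -> inD s -> edge s t ->
  (forall r, edge s r -> r != t -> w r = w s) -> w t = w s.
Proof.
move=> hw sD e hr; have := hw s sD; rewrite (lap_split _ _ e) big1 ?addr0.
  by move/eqP; rewrite mulf_eq0 (negbTE (conductivity_neq0 e)) subr_eq0 => /eqP.
by move=> r /andP [er rt]; rewrite /flux hr // subrr mulr0.
Qed.

Lemma harmonic_two_nb w (s t t' : pt) : harmonic g w -> inD s ->
  edge s t -> edge s t' -> t' != t -> w s = 0 ->
  (forall r, edge s r -> r != t -> r != t' -> w r = 0) -> w t' != 0 -> w t != 0.
Proof.
move=> hw sD e e' t't ws hr wt'; have := hw s sD.
rewrite (lap_split _ _ e) (bigD1 t') /= ?e' // big1 ?addr0.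
  rewrite /flux ws !subr0 => /eqP; apply: contraTneq => ->.
  by rewrite mulr0 add0r mulf_neq0 ?conductivity_neq0.
by move=> r /andP [/andP [er rt] rt']; rewrite /flux hr // ws subrr mulr0.
Qed.

Section MaxPrinciple.
Variable w : pt -> R.
Hypotheses (w_harm : harmonic g w) (w_bd : forall b, inBd b -> w b = 0).

(* At a positive interior maximum every flux is <= 0 and they sum to 0. *)
Lemma harmonic_max_nb (p q : pt) : inD p -> (forall r, inD r -> w r <= w p) -> 0 < w p ->
  edge p q -> w q = w p.
Proof.
move=> pD pmax wp e.
have flux_ge0 r : edge p r -> 0 <= - flux g w p r.
  move=> er; rewrite oppr_ge0 /flux pmulr_rle0 ?conductivity_gt0 // subr_le0.
  by case/orP: (edge_inVr er) => [/pmax //|/w_bd ->]; apply: ltW.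
have : \sum_(r | edge p r) - flux g w p r = 0 by rewrite sumrN [X in - X](w_harm pD) oppr0.
move/(psumr_eq0P flux_ge0)/(_ q e)/eqP.
by rewrite oppr_eq0 mulf_eq0 (negbTE (conductivity_neq0 e)) /= subr_eq0 => /eqP.
Qed.

Lemma harmonic_bd0_le0 t : inD t -> w t <= 0.
Proof.
move=> tD; rewrite leNgt; apply/negP => wt.
case: (@arg_maxP _ _ _ t (fun p => inD p) w tD) => m mD mmax.
have wm : 0 < w m by apply: lt_le_trans wt (mmax t tD).
suff descend k p : inD p -> (p i0 <= k)%N -> w p = w m -> False by apply: (descend _ m).
elim: k p => [|k IH] p /inDP pD; first by have := pD i0; lia.
have /andP [pi1 _] := pD i0; move/inDP: (pD) => pD' hk wp.
have e := edge_down_at_inD n_gt0 i0 pD'.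
have wq : w (down_at i0 p) = w m.
  by rewrite (harmonic_max_nb pD') ?wp // => r /mmax; rewrite wp.
apply: (IH (down_at i0 p)); rewrite ?down_at_eq ?wq //; last by lia.
case/orP: (edge_inVr e) => // /w_bd w0; move: wm; by rewrite -wq w0 ltxx.
Qed.

End MaxPrinciple.

Lemma harmonic_bd0_eq0 w : harmonic g w -> (forall b, inBd b -> w b = 0) ->
  forall t, inD t -> w t = 0.
Proof.
move=> hw hb t tD; apply/eqP; rewrite eq_le harmonic_bd0_le0 //=.
rewrite -oppr_le0; apply: (@harmonic_bd0_le0 (fun x => - w x)) => //.
  by move=> s sD; rewrite lapN hw ?oppr0.
by move=> b bB; rewrite hb ?oppr0.
Qed.

Lemma dirichlet_sol_uniq phi u w : dirichlet_sol g phi u -> dirichlet_sol g phi w ->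
  forall t, inV t -> u t = w t.
Proof.
move=> [hu bu] [hw bw] t /orP [tD|tB]; last by rewrite bu // bw.
apply/eqP; rewrite -subr_eq0; apply/eqP.
apply: (@harmonic_bd0_eq0 (fun x => u x - w x)) => //.
  by move=> s sD; rewrite lapB hu // hw // subrr.
by move=> b bB; rewrite bu // bw // subrr.
Qed.

Section Existence.
Local Notation N := #|{: pt}|.

Definition dirichlet_op u (t : pt) : R := if inD t then lap g u t else u t.

Definition dirichlet_mx : 'M[R]_N :=
  \matrix_(j, k) dirichlet_op (fun s => (s == enum_val j)%:R) (enum_val k).

Definition mx_fun (x : 'rV[R]_N) (s : pt) : R := x 0 (enum_rank s).

Lemma mx_funE (x : 'rV[R]_N) s : \sum_j x 0 j * (s == enum_val j)%:R = mx_fun x s.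
Proof.
rewrite (bigD1 (enum_rank s)) //= enum_rankK eqxx mulr1 big1 ?addr0 // => j hj.
rewrite (_ : s == enum_val j = false) ?mulr0 //.
by apply: contraNF hj => /eqP ->; rewrite enum_valK.
Qed.

Lemma dirichlet_mxE (x : 'rV[R]_N) t :
  (x *m dirichlet_mx) 0 (enum_rank t) = dirichlet_op (mx_fun x) t.
Proof.
rewrite mxE; under eq_bigr do rewrite mxE enum_rankK.
rewrite /dirichlet_op; case: inD; last exact: mx_funE.
by rewrite -lap_sum; apply: lap_ext => s; rewrite mx_funE.
Qed.

Lemma dirichlet_mx_unit : dirichlet_mx \in unitmx.
Proof.
rewrite -row_free_unit -kermx_eq0; apply/eqP/row_matrixP => j; rewrite row0.
set x := row j _; have /sub_kermxP hx : (x <= kermx dirichlet_mx)%MS by apply: row_sub.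
have op0 t : dirichlet_op (mx_fun x) t = 0 by rewrite -dirichlet_mxE hx mxE.
have bd0 t : ~~ inD t -> mx_fun x t = 0 by move=> tD; have := op0 t; rewrite /dirichlet_op (negbTE tD).
apply/rowP => k; rewrite [RHS]mxE -[k]enum_valK -/(mx_fun x (enum_val k)).
case tD : (inD (enum_val k)); last by rewrite bd0 ?tD.
apply: harmonic_bd0_eq0 => // [s sD|b /inBd_notD/bd0 //].
by have := op0 s; rewrite /dirichlet_op sD.
Qed.

Lemma dirichlet_sol_exists phi : exists u, dirichlet_sol g phi u.
Proof.
pose y : 'rV[R]_N := \row_k (if inD (enum_val k) then 0 else phi (enum_val k)).
pose x := y *m invmx dirichlet_mx.
have hx t : dirichlet_op (mx_fun x) t = if inD t then 0 else phi t.
  by rewrite -dirichlet_mxE mulmxKV ?dirichlet_mx_unit // mxE enum_rankK.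
exists (mx_fun x); split => [s sD|b bB]; first by have := hx s; rewrite /dirichlet_op sD.
by have := hx b; rewrite /dirichlet_op (negbTE (inBd_notD bB)).
Qed.

End Existence.

Lemma Sol_spec phi : dirichlet_sol g phi (Sol g phi).
Proof. by rewrite /Sol; apply: epsilon_spec; apply: dirichlet_sol_exists. Qed.

Lemma Sol_eq phi w : dirichlet_sol g phi w -> forall t, inV t -> Sol g phi t = w t.
Proof. exact: dirichlet_sol_uniq (Sol_spec phi). Qed.

End Dirichlet.


Section Sweep.
Variables (d n : nat) (R : realType).
Hypothesis n_gt0 : (0 < n)%N.
Local Notation pt := (pt d n).
Variable g : pt -> pt -> R.
Hypothesis hg : conductivity g.
Variables (i : 'I_d) (beta : pt -> R).

Definition swept (t : pt) : bool := (0 < t i)%N && inD (down_at i t).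

(* Step k fixes the values on the layer [t i = k.+1] so that the Laplacian
   vanishes on the interior points of the layer [t i = k]. *)
Definition sweep_step (U : pt -> R) (k : nat) (t : pt) : R :=
  let s := down_at i t in
  if ((t i : nat) == k.+1) && inD s then
    U s - (\sum_(r | edge s r && (r != t)) flux g U s r) / g s t
  else U t.

Fixpoint sweep_upto (k : nat) : pt -> R :=
  if k is k'.+1 then sweep_step (sweep_upto k') k' else beta.

Definition sweep : pt -> R := sweep_upto n.+1.

Lemma sweep_upto_stable k k' (t : pt) : (t i <= k)%N -> (k <= k')%N ->
  sweep_upto k' t = sweep_upto k t.
Proof.
move=> tk; elim: k' => [|k' IH] kk'; first by have -> : k = 0%N by lia.
have [->//|nk] := eqVneq k k'.+1.
by rewrite /= /sweep_step (_ : _ == _ = false) ?IH //; lia.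
Qed.

Lemma sweep_unswept (t : pt) : ~~ swept t -> sweep t = beta t.
Proof.
rewrite /sweep => ts; elim: n.+1 => [//|k IH] /=; rewrite /sweep_step.
by case: ifP => // /andP [/eqP ti tD]; move: ts; rewrite /swept ti tD.
Qed.

Lemma sweep_harmonic : harmonic g sweep.
Proof.
move=> s sD; have /inDP/(_ i)/andP [_ sin] := sD.
set k := nat_of_ord (s i); set t := up_at i s.
have e : edge s t := edge_up_at_inD n_gt0 i sD.
have ti : (t i : nat) = k.+1 by rewrite up_at_eq.
have ts : down_at i t = s by rewrite up_atK.
have stable (r : pt) : (r i <= k)%N -> sweep r = sweep_upto k r.
  by move=> rk; apply: sweep_upto_stable; lia.
rewrite (lap_split _ _ e); set S := \sum_(r | _) _; rewrite {1}/flux.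
have -> : sweep t = sweep s - S / g s t.
  rewrite /sweep (sweep_upto_stable (k := k.+1)) ?ti //.
  rewrite /= /sweep_step ti eqxx ts sD /= -stable //.
  congr (_ - _ / _); apply: eq_bigr => r /andP [er rt].
  by rewrite /flux (stable r) ?(stable s) //; apply: edge_coord_le_up er rt.
have := conductivity_neq0 hg e => gne.
by field.
Qed.

End Sweep.

Section HalfSpace.
Variables (d n : nat).
Local Notation pt := (pt d n).
Variables (i v : 'I_d) (b : pt).
Hypothesis iv : i != v.

Definition tilt (t : pt) : int := (t v)%:Z - (t i)%:Z.

Definition above (t : pt) : bool := tilt b < tilt t.

Lemma tilt_down_at_i (p : pt) : (0 < p i)%N -> tilt (down_at i p) = tilt p + 1.
Proof. by move=> hp; rewrite /tilt down_at_eq down_at_neq 1?eq_sym //; lia. Qed.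

Lemma tilt_down_at_v (p : pt) : (0 < p v)%N -> tilt (down_at v p) = tilt p - 1.
Proof. by move=> hp; rewrite /tilt down_at_eq down_at_neq //; lia. Qed.

Lemma tilt_other (p : pt) j k : j != i -> j != v -> tilt (set_coord p j k) = tilt p.
Proof. by move=> ji jv; rewrite /tilt !set_coord_neq 1?eq_sym. Qed.

Lemma tilt_edge_cases (s r : pt) : edge s r ->
  tilt s <= tilt r \/ tilt r = tilt s - 1 /\ (r = up_at i s \/ r = down_at v s).
Proof.
move=> /edge_up_down [j [[-> hj]|[-> hj]]].
- have [ji|ji] := eqVneq j i; first subst j.
    by right; split; [rewrite /tilt up_at_eq // up_at_neq 1?eq_sym //; lia | left].
  have [jv|jv] := eqVneq j v; last by rewrite tilt_other //; left.
  by subst j; left; rewrite /tilt up_at_eq // up_at_neq //; lia.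
- have [ji|ji] := eqVneq j i; first by subst j; left; rewrite tilt_down_at_i //; lia.
  have [jv|jv] := eqVneq j v; last by rewrite tilt_other //; left.
  by subst j; right; split; [rewrite tilt_down_at_v | right].
Qed.

Lemma tilt_edge_ge (s r : pt) : edge s r -> r != up_at i s -> r != down_at v s ->
  tilt s <= tilt r.
Proof. by move=> /tilt_edge_cases [//|[_ [->|->]]]; rewrite eqxx. Qed.

Lemma tilt_edge (s r : pt) : edge s r -> tilt s <= tilt r + 1.
Proof. by move=> /tilt_edge_cases [|[-> _]]; lia. Qed.

End HalfSpace.

Section Continuation.
Variables (d n : nat) (R : realType).
Hypothesis n_gt0 : (0 < n)%N.
Local Notation pt := (pt d n).
Variable g : pt -> pt -> R.
Hypothesis hg : conductivity g.
Variables (i v : 'I_d) (b : pt).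
Hypothesis iv : i != v.
Local Notation above := (above i v b).

(* For a swept point [t] of the half-space, the harmonic equation at
   [down_at i t] involves, besides [t], only points of the half-space with a
   smaller [i]-coordinate. *)
Lemma harmonic_above_vanish (w : pt -> R) : harmonic g w ->
  (forall t, inV t -> above t -> ~~ swept i t -> w t = 0) ->
  forall t, inV t -> above t -> w t = 0.
Proof.
move=> hw h0; suff H k (t : pt) : (t i <= k)%N -> inV t -> above t -> w t = 0 by move=> t; apply: H.
elim: k t => [|k IH] t tk tV tH; case/boolP: (swept i t) => [|/h0]; try by apply.
  by case/andP; lia.
case/andP => ti0 sD; set s := down_at i t.
have ts : t = up_at i s by rewrite down_atK.
have e : edge s t by rewrite ts; apply: edge_up_at_inD.
have ws : w s = 0.
  apply: IH; rewrite ?down_at_eq /inV ?sD //; first by lia.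
  by move: tH; rewrite /above tilt_down_at_i //; lia.
rewrite (harmonic_last_nb hg hw sD e) // => r er rt; rewrite ws.
apply: IH; [|exact: edge_inVr er|].
  by move: rt; rewrite ts => /(edge_coord_le_up er); rewrite down_at_eq; lia.
by move: tH; have := tilt_edge iv er; rewrite /above tilt_down_at_i //; lia.
Qed.

End Continuation.

Section SpecialSolution.
Variables (d n : nat) (R : realType).
Hypothesis n_gt0 : (0 < n)%N.
Local Notation pt := (pt d n).
Variable g : pt -> pt -> R.
Hypothesis hg : conductivity g.
Variables (i v : 'I_d) (b : pt).
Hypothesis iv : i != v.
Local Notation tilt := (tilt i v).
Local Notation above := (above i v b).
Hypothesis b_other : forall o, o != i -> o != v -> ~~ extreme (b o).
Hypotheses (bi_gt0 : (0 < b i)%N) (bv_le : (b v <= n)%N).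
Hypothesis b_corner : (0 < b v)%N || (b i <= n)%N.

(* The diagonal segment through [b] in the (i, v)-plane, descending from
   [diag j0 = b] until it leaves the points that can be swept in direction [i]. *)
Let j0 := minn (b i).-1 (b v).
Let diag (k : nat) : pt := set_coord (set_coord b i (b i - j0 + k)) v (b v - j0 + k).

Let bi_le : (b i <= n.+1)%N. Proof. exact: coord_le. Qed.

Let diag_i k : (k <= j0)%N -> (diag k i : nat) = (b i - j0 + k)%N.
Proof. by move=> hk; rewrite set_coord_neq // set_coord_eq //; lia. Qed.

Let diag_v k : (k <= j0)%N -> (diag k v : nat) = (b v - j0 + k)%N.
Proof. by move=> hk; rewrite set_coord_eq //; lia. Qed.

Let diag_o k o : o != i -> o != v -> diag k o = b o.
Proof. by move=> oi ov; rewrite !set_coord_neq. Qed.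

Let tilt_diag k : (k <= j0)%N -> tilt (diag k) = tilt b.
Proof. by move=> hk; rewrite /tilt diag_i // diag_v //; lia. Qed.

Let diag_j0 : diag j0 = b.
Proof.
apply: pt_eq => o; have [->|ov] := eqVneq o v; first by rewrite diag_v //; lia.
by have [->|oi] := eqVneq o i; [rewrite diag_i //; lia | rewrite diag_o].
Qed.

Let diag0_unswept : ~~ swept i (diag 0).
Proof.
rewrite /swept negb_and; apply/orP; right; apply/negP => /inDP H.
have := H i; have := H v; rewrite down_at_eq down_at_neq 1?eq_sym // diag_i // diag_v //.
by move: b_corner; lia.
Qed.

Let u := sweep g i (fun t => (t == diag 0)%:R).

Let u_harmonic : harmonic g u.
Proof. exact: sweep_harmonic. Qed.

Let u_above t : inV t -> above t -> u t = 0.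
Proof.
move: t; apply: (harmonic_above_vanish n_gt0 hg iv u_harmonic) => t _ tH ts.
rewrite /u sweep_unswept //; case: eqP => // tz.
by move: tH; rewrite /above tz tilt_diag ?ltxx.
Qed.

(* Between [diag k] and [diag k.+1] sits an interior point [s] of the
   half-space whose only neighbours outside it are these two. *)
Let diag_step k : (k < j0)%N -> let s := down_at i (diag k.+1) in
  [/\ inD s, above s, diag k.+1 = up_at i s & diag k = down_at v s].
Proof.
move=> hk s; have si : (s i : nat) = (b i - j0 + k)%N by rewrite down_at_eq diag_i //; lia.
have sv : (s v : nat) = (b v - j0 + k.+1)%N by rewrite down_at_neq ?diag_v // eq_sym.
split.
- apply/inDP => o; have [->|oi] := eqVneq o i; first by rewrite si; lia.
  have [->|ov] := eqVneq o v; first by rewrite sv; lia.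
  by rewrite down_at_neq // diag_o //; move: (b_other oi ov); rewrite extremeE negbK.
- by rewrite /above tilt_down_at_i ?tilt_diag ?diag_i //; lia.
- by rewrite down_atK // diag_i //; lia.
- apply: pt_eq => o; have [->|ov] := eqVneq o v; first by rewrite down_at_eq sv diag_v //; lia.
  rewrite down_at_neq //; have [->|oi] := eqVneq o i; first by rewrite si diag_i //; lia.
  by rewrite down_at_neq // !diag_o.
Qed.

Let u_diag k : (k <= j0)%N -> u (diag k) != 0.
Proof.
elim: k => [_|k IH hk]; first by rewrite /u sweep_unswept // eqxx oner_eq0.
have [sD sH tE yE] := diag_step hk; set s := down_at i _ in sD sH tE yE.
have e : edge s (diag k.+1) by rewrite tE; apply: edge_up_at_inD.
have e' : edge s (diag k) by rewrite yE; apply: edge_down_at_inD.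
apply: (harmonic_two_nb hg u_harmonic sD e e') (IH (ltnW hk)).
- by apply: contraTneq isT => hyt; have := congr1 (fun p : pt => p v : nat) hyt;
    rewrite /= !diag_v //; lia.
- by rewrite u_above //; exact: (edge_inVl e).
- move=> r er rt ry; apply: u_above; first exact: edge_inVr er.
  by rewrite tE yE in rt ry; move: sH; rewrite /above; have := tilt_edge_ge iv er rt ry; lia.
Qed.

Lemma special_solution : exists w : pt -> R,
  [/\ harmonic g w, forall t, inV t -> above t -> w t = 0 & w b != 0].
Proof. by exists u; split => //; rewrite -diag_j0; apply: u_diag. Qed.

End SpecialSolution.

Section Calderon.
Variables (d n : nat) (R : realType).
Hypothesis n_gt0 : (0 < n)%N.
Local Notation pt := (pt d n).
Variables g g' : pt -> pt -> R.
Hypotheses (hg : conductivity g) (hg' : conductivity g').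
Hypothesis hL : forall phi b, inBd b -> DtN g phi b = DtN g' phi b.
Variables v i0 : 'I_d.
Hypothesis i0v : i0 != v.
Local Notation S := (Sol g).
Local Notation S' := (Sol g').

Let S_harmonic phi : harmonic g (S phi).
Proof. by case: (Sol_spec n_gt0 i0 hg phi). Qed.

Let S'_harmonic phi : harmonic g' (S' phi).
Proof. by case: (Sol_spec n_gt0 i0 hg' phi). Qed.

Let S_bd phi b : inBd b -> S phi b = phi b.
Proof. by case: (Sol_spec n_gt0 i0 hg phi) => _; apply. Qed.

Let S'_bd phi b : inBd b -> S' phi b = phi b.
Proof. by case: (Sol_spec n_gt0 i0 hg' phi) => _; apply. Qed.

Let S_harmonicE w t : harmonic g w -> inV t -> S w t = w t.
Proof. by move=> hw; apply: (Sol_eq n_gt0 i0 hg). Qed.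

Lemma Sol_flux_eq phi (s t : pt) : edge s t ->
  (inD s -> forall r, edge s r -> r != t -> flux g (S phi) s r = flux g' (S' phi) s r) ->
  flux g (S phi) s t = flux g' (S' phi) s t.
Proof.
move=> e hr; case/orP: (edge_inVl e) => [sD|sB]; last first.
  by have := hL phi sB; rewrite /DtN !(current_eq _ _ sB e).
have {}hr := hr sD; have hsum : \sum_(r | edge s r && (r != t)) flux g (S phi) s r =
                                \sum_(r | edge s r && (r != t)) flux g' (S' phi) s r.
  by apply: eq_bigr => r /andP [er rt]; apply: hr.
move: (S_harmonic phi sD) (S'_harmonic phi sD); rewrite !(lap_split _ _ e) hsum.
by lra.
Qed.

(* Unique continuation from the face [t i = 0], where [w] has zero Cauchy
   data for both conductivities. *)
Lemma Sol_vanish_above (i : 'I_d) (b : pt) (w : pt -> R) : i != v -> harmonic g w ->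
  (forall t, inV t -> above i v b t -> w t = 0) ->
  forall t, inV t -> above i v b t -> S' w t = 0.
Proof.
move=> iv hw hz; apply: (harmonic_above_vanish n_gt0 hg' iv (S'_harmonic w)).
move=> t /orP [tD|tB] tH; last by rewrite S'_bd // hz // /inV tB orbT.
have /inDP/(_ i)/andP [ti0 _] := tD; rewrite /swept ti0 /= => sD.
set s := down_at i t in sD; have e : edge s t by rewrite edge_sym; apply: edge_down_at_inD.
have [sV tV] := (edge_inVl e, edge_inVr e).
have sB : inBd s by case/orP: sV => // sD'; rewrite sD' in sD.
have sH : above i v b s by move: tH; rewrite /above tilt_down_at_i //; lia.
have : flux g (S w) s t = flux g' (S' w) s t.
  by apply: Sol_flux_eq => // sD'; rewrite sD' in sD.
rewrite /flux !S_harmonicE // !hz // (S'_bd w sB) hz // subrr mulr0 subr0 => /esym/eqP.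
by rewrite mulf_eq0 (negbTE (conductivity_neq0 hg' e)) => /eqP.
Qed.

Definition agree_below (m : nat) : Prop :=
  forall p q : pt, edge p q -> (p v < m)%N -> g p q = g' p q.

Definition agree_upto (m : nat) : Prop :=
  forall p q : pt, edge p q -> (p v <= m)%N -> (q v <= m)%N -> g p q = g' p q.

Lemma agree_sym (p q : pt) : edge p q -> g q p = g' q p -> g p q = g' p q.
Proof. by case: hg hg' => _ sym [_ sym'] e h; rewrite sym // sym'. Qed.

Lemma agree_upto_below m : agree_upto m -> agree_below m.
Proof. by move=> h p q e pm; apply: h; have := edge_coord_le v e; lia. Qed.

Lemma Sol_agree_below m : agree_below m ->
  forall phi t, inV t -> (t v <= m)%N -> S phi t = S' phi t.
Proof.
move=> hm phi; suff H k (t : pt) : (t v <= k <= m)%N -> inV t -> S phi t = S' phi t.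
  by move=> t tV tm; apply: (H (t v)) => //; rewrite leqnn.
elim: k t => [|k IH] t hk /orP [tD|tB]; try by rewrite S_bd // S'_bd.
  by have /inDP/(_ v) := tD; lia.
have /inDP/(_ v)/andP [tv0 _] := tD; set s := down_at v t.
have ts : t = up_at v s by rewrite down_atK.
have e : edge s t by rewrite edge_sym; apply: edge_down_at_inD.
have sv : (s v < m)%N by rewrite down_at_eq; lia.
have Ss : S phi s = S' phi s by apply: IH (edge_inVl e); rewrite down_at_eq; lia.
have : flux g (S phi) s t = flux g' (S' phi) s t.
  apply: Sol_flux_eq => // sD r er rt.
  have rv : (r v <= s v)%N by apply: edge_coord_le_up er _; rewrite -ts.
  by rewrite /flux Ss hm // IH // ?(edge_inVr er) //; rewrite down_at_eq in rv *; lia.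
by rewrite /flux Ss hm // => /(mulfI (conductivity_neq0 hg' e))/addIr.
Qed.

(* Test the special solution centred at [p]: it vanishes at [q] for both
   conductivities, and all other fluxes out of [p] already agree. *)
Lemma agree_vertical m : agree_upto m -> (m <= n)%N ->
  forall p q : pt, edge p q -> (p v : nat) = m -> (q v : nat) = m.+1 -> g p q = g' p q.
Proof.
move=> hm mn p q e pv qv; have hb := Sol_agree_below (agree_upto_below hm).
have [pV qV] := (edge_inVl e, edge_inVr e).
have qE : q = up_at v p by apply: edge_coord_gt e _; lia.
have p_other o : o != v -> ~~ extreme (p o).
  by move=> ov; apply: (edge_same_coord e); rewrite qE up_at_neq.
have /andP [pi0 pin] : (0 < p i0 <= n)%N by rewrite -extremeN p_other.
have pvn : (p v <= n)%N by rewrite pv.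
have corner : (0 < p v)%N || (p i0 <= n)%N by rewrite pin orbT.
have [w [hw hz wp]] := special_solution n_gt0 hg i0v (fun o _ => p_other o) pi0 pvn corner.
have qH : above i0 v p q by rewrite /above qE /tilt up_at_eq // up_at_neq //; lia.
have : flux g (S w) p q = flux g' (S' w) p q.
  apply: Sol_flux_eq => // pD r er rq.
  have rv : (r v <= m)%N by rewrite -pv; apply: edge_coord_le_up er _; rewrite -qE.
  by rewrite /flux hm ?pv // !hb ?(edge_inVr er) ?pv.
rewrite /flux S_harmonicE ?hz // (Sol_vanish_above i0v hw hz qV qH) -hb ?pv //.
by rewrite S_harmonicE // => /mulIf; apply; rewrite sub0r oppr_eq0.
Qed.

Lemma agree_horizontal m : agree_below m.+1 -> (m.+1 <= n)%N ->
  forall (p r : pt) l, edge p r -> (p v : nat) = m.+1 -> (r v : nat) = m.+1 ->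
  (p l < r l)%N -> g p r = g' p r.
Proof.
move=> hm mn p r l e pv rv plr; have hb := Sol_agree_below hm.
have [pV rV] := (edge_inVl e, edge_inVr e).
have rE : r = up_at l p by apply: edge_coord_gt e plr.
have lv : l != v by apply: contraTneq plr => ->; rewrite pv rv ltnn.
have r_other o : o != l -> o != v -> ~~ extreme (r o).
  by move=> ol _; rewrite rE up_at_neq //; apply: (edge_same_coord e); rewrite rE up_at_neq.
have rl0 : (0 < r l)%N by apply: leq_ltn_trans plr.
have rvn : (r v <= n)%N by rewrite rv.
have corner : (0 < r v)%N || (r l <= n)%N by rewrite rv.
have [w [hw hz wr]] := special_solution n_gt0 hg lv r_other rl0 rvn corner.
have pH : above l v r p.
  by rewrite /above /tilt rv -pv; have := edge_coord_le l e; lia.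
have Sp : S w p = 0 by rewrite S_harmonicE ?hz.
have S'p := Sol_vanish_above lv hw hz pV pH.
have : flux g (S w) p r = flux g' (S' w) p r.
  apply: Sol_flux_eq => // pD t et tr; have tV := edge_inVr et.
  case: (tilt_edge_cases lv et) => [tH|[_ [tE|tE]]]; last 2 first.
  - by rewrite tE -rE eqxx in tr.
  - have tv : (t v < m.+1)%N by rewrite tE down_at_eq pv.
    have gt : g p t = g' p t by apply: (agree_sym et); apply: hm tv; rewrite edge_sym.
    by rewrite /flux gt (hb w t) ?(hb w p) ?pv // ltnW.
  have {}tH : above l v r t by move: pH tH; rewrite /above; lia.
  by rewrite /flux S_harmonicE ?hz // Sp S'p (Sol_vanish_above lv hw hz tV tH) !subrr !mulr0.
rewrite /flux Sp S'p !subr0 -hb ?rv // => /mulIf; apply.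
by rewrite S_harmonicE.
Qed.

Lemma agree_upto0 : agree_upto 0.
Proof.
move=> p q e p0 q0; have pq : p v = q v by apply: val_inj => /=; lia.
by have := edge_same_coord e pq; rewrite extremeN; lia.
Qed.

Lemma agree_upto_succ m : (m <= n)%N -> agree_upto m -> agree_upto m.+1.
Proof.
move=> mn hm.
have hb : agree_below m.+1.
  move=> p q e; rewrite ltnS => pm; have [qm|qm] := leqP (q v) m; first exact: hm.
  by apply: (agree_vertical hm) => //; have := edge_coord_le v e; lia.
move=> p q e pm qm; have [pm'|pm'] := leqP (p v) m; first by apply: hb.
have [qm'|qm'] := leqP (q v) m.
  by apply: (agree_sym e); apply: hb => //; rewrite edge_sym.
have pv : (p v : nat) = m.+1 by lia.
have qv : (q v : nat) = m.+1 by lia.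
have [mn'|nm] := leqP m.+1 n; last first.
  by have := edge_same_coord e (val_inj (etrans pv (esym qv))); rewrite extremeN; lia.
have [j [[qE pj]|[qE pj]]] := edge_up_down e.
  by apply: (agree_horizontal hb mn' e pv qv (l := j)); rewrite qE up_at_eq.
apply: (agree_sym e); apply: (agree_horizontal hb mn' _ qv pv (l := j)).
  by rewrite edge_sym.
by rewrite qE down_at_eq; lia.
Qed.

Lemma agree_everywhere (p q : pt) : edge p q -> g p q = g' p q.
Proof.
suff H m : (m <= n.+1)%N -> agree_upto m by move=> e; apply: (H n.+1) => //; apply: coord_le.
elim: m => [_|m IH hm]; first exact: agree_upto0.
by apply: agree_upto_succ; [|apply: IH]; lia.
Qed.

End Calderon.

Theorem theorem1p1 (R : realType) (d n : nat) (hd : (2 <= d)%N) (hn : (1 <= n)%N)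
  (g g' : pt d n -> pt d n -> R)
  (hg : conductivity g) (hg' : conductivity g')
  (hL : forall (phi : pt d n -> R) (b : pt d n),
          inBd b -> DtN g phi b = DtN g' phi b) :
  forall p q : pt d n, edge p q -> g p q = g' p q.
Proof.
have d_gt0 : (0 < d)%N by apply: leq_trans hd.
pose v : 'I_d := Ordinal d_gt0; pose i0 : 'I_d := Ordinal hd.
have i0v : i0 != v by [].
exact: (@agree_everywhere _ _ _ hn _ _ hg hg' hL v i0 i0v).
Qed.
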